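(* Let $P_n$ be the path with vertices $x_1,\dots,x_n$ and edges $\{x_i,x_{i+1}\}$ ($1\le i\le n-1$). Then no stable set corresponding to $v(P_n)$ contains both endpoints $x_1$ and $x_n$.
   Context: Let $K$ be a field and $S=K[x_1,\dots,x_n]$ standard graded. For a proper graded ideal $I$, the $v$-number is $v(I)=\min\{k\ge 0 : \exists f\in S_k,\ \mathcal P\in\operatorname{Ass}(S/I) \text{ with } (I:f)=\mathcal P\}$. For a graph $G$, $I(G)$ is its edge ideal (generated by $x_ix_j$ over edges $\{x_i,x_j\}$) and $v(G):=v(I(G))$. A set $A$ of vertices is stable if it contains no edge. For a stable set $A$, its neighbour set is $N_G(A)=\{x\in V(G) : \{x\}\cup A \text{ contains an edge of } G\}$. A vertex cover is a set of vertices meeting every edge; it is minimal if minimal under inclusion. Let $\mathcal A_G$ be the collection of stable sets $A$ of $G$ such that $N_G(A)$ is a minimal vertex cover of $G$; it is known that $v(G)=\min\{|A| : A\in\mathcal A_G\}$. A stable set corresponding to $v(G)$ is an $A\in\mathcal A_G$ with $|A|=v(G)$. *)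

From mathcomp Require Import all_boot.
Set Implicit Arguments. Unset Strict Implicit. Unset Printing Implicit Defensive.

Section Graphs.
Variable T : finType.
Variable e : rel T.

Definition has_edge (A : {set T}) : bool :=
  [exists x in A, exists y in A, e x y].

Definition stable (A : {set T}) : bool := ~~ has_edge A.

Definition nbhd (A : {set T}) : {set T} := [set x | has_edge (x |: A)].

Definition vertex_cover (C : {set T}) : bool :=
  [forall x, forall y, e x y ==> (x \in C) || (y \in C)].

Definition min_vertex_cover (C : {set T}) : bool :=
  vertex_cover C && [forall D : {set T}, (D \proper C) ==> ~~ vertex_cover D].

Definition calA (A : {set T}) : bool := stable A && min_vertex_cover (nbhd A).

(* A is a stable set corresponding to v(G) = min {|A| : A in A_G} *)
Definition v_stable_set (A : {set T}) : Prop :=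
  calA A /\ forall B : {set T}, calA B -> #|A| <= #|B|.
End Graphs.

(* The path P_{n+1} on vertices 'I_(n+1): x_{i+1} is the ordinal i;
   edges {i, i+1}. *)
Definition path_rel (n : nat) : rel 'I_n.+1 :=
  fun i j => (i.+1 == j :> nat) || (j.+1 == i :> nat).
Arguments path_rel : clear implicits.

From mathcomp Require Import all_boot.
From mathcomp Require Import zify.
Set Implicit Arguments. Unset Strict Implicit. Unset Printing Implicit Defensive.

(* Let A be in A_G for the path on x_0, ..., x_n with x_0, x_n in A.  Since
   N(A) covers every edge, every four consecutive vertices meet A.  Drop x_n
   from A and shift the remaining vertices two steps towards x_n (which stays
   inside the path because A is stable).  The result is still stable, and its
   neighbourhood still covers every edge, since each edge has a shifted vertex
   within distance one of it.  A stable set whose neighbourhood is a vertex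
   cover is automatically in A_G, so v(P) <= |A| - 1 < |A|. *)

Section StableSets.
Variables (T : finType) (e : rel T).
Hypothesis e_irr : irreflexive e.

Lemma has_edgeP (A : {set T}) :
  reflect (exists x y, [/\ x \in A, y \in A & e x y]) (has_edge e A).
Proof.
apply: (iffP existsP).
- by move=> [x /andP[xA /existsP[y /andP[yA exy]]]]; exists x, y.
- move=> [x [y [xA yA exy]]]; exists x; rewrite xA /=.
  by apply/existsP; exists y; rewrite yA.
Qed.

Lemma stableP (A : {set T}) :
  reflect {in A &, forall x y, ~~ e x y} (stable e A).
Proof.
apply: (iffP negP) => [nE x y xA yA | sA /has_edgeP[x [y [xA yA]]]].
  by apply/negP => exy; apply: nE; apply/has_edgeP; exists x, y.
by apply/negP; exact: sA.
Qed.

Lemma vertex_coverP (C : {set T}) :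
  reflect (forall x y, e x y -> (x \in C) || (y \in C)) (vertex_cover e C).
Proof.
apply: (iffP forallP) => [vc x y | vc x].
  by move/forallP: (vc x) => /(_ y) /implyP.
by apply/forallP => y; apply/implyP; exact: vc.
Qed.

Lemma nbhdP (B : {set T}) x : stable e B ->
  reflect (exists2 b, b \in B & e x b || e b x) (x \in nbhd e B).
Proof.
move=> /stableP sB; rewrite inE; apply: (iffP (has_edgeP _)).
- move=> [u [v []]]; rewrite !in_setU1.
  move=> /predU1P[-> | uB] /predU1P[-> | vB] euv.
  + by rewrite e_irr in euv.
  + by exists v; rewrite ?euv.
  + by exists u; rewrite ?euv ?orbT.
  + by rewrite (negbTE (sB u v uB vB)) in euv.
- move=> [b bB /orP[exb | ebx]].
  + by exists x, b; rewrite !in_setU1 eqxx bB orbT.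
  + by exists b, x; rewrite !in_setU1 eqxx bB orbT.
Qed.

(* Minimality is automatic: a vertex x of N(B) missing from a smaller cover D
   forces its neighbour b in B into D, hence into N(B), against stability. *)
Lemma calAE (B : {set T}) :
  calA e B = stable e B && vertex_cover e (nbhd e B).
Proof.
rewrite /calA /min_vertex_cover; have [sB | //] := boolP (stable e B).
have [vc | //] := boolP (vertex_cover e _); rewrite andbT.
apply/forallP => D; apply/implyP => /properP[subD [x xN xD]].
apply/negP => /vertex_coverP vcD.
have [b bB exb] := nbhdP x sB xN.
have bD : b \in D.
  by case/orP: exb => /vcD; rewrite (negbTE xD) ?orbF.
have [b' b'B ebb'] := nbhdP b sB (subsetP subD b bD).
have /stableP nE := sB.
by case/orP: ebb'; apply/negP; exact: nE.
Qed.

End StableSets.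

Section PathGraph.
Variable n : nat.
Local Notation P := (path_rel n).

Lemma path_rel_irr : irreflexive P.
Proof. by move=> x; rewrite /path_rel; lia. Qed.

Lemma path_window (A : {set 'I_n.+1}) :
  stable P A -> vertex_cover P (nbhd P A) -> ord0 \in A ->
  forall x : 'I_n.+1, exists2 a : 'I_n.+1, a \in A & x - 3 <= a <= x.
Proof.
move=> sA /vertex_coverP vcA A0 x; have [x_le2 | x_gt2] := leqP x 2.
  by exists ord0 => //=; lia.
have x_le_n := ltn_ord x.
have /vcA : P (inord (x - 2)) (inord (x - 1)) by rewrite /path_rel !inordK; lia.
by case/orP => /(nbhdP path_rel_irr _ sA)[a aA adj]; exists a => //;
  move: adj; rewrite /path_rel !inordK; lia.
Qed.

Lemma stable_ord_max_gap (A : {set 'I_n.+1}) :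
  stable P A -> ord_max \in A -> forall a, a \in A :\ ord_max -> a.+2 <= n.
Proof.
move=> /stableP sA An a; rewrite !inE => /andP[a_ne_max aA].
have a_ne_n : (a : nat) != n.
  by apply: contra a_ne_max => /eqP a_n; apply/eqP/val_inj.
have := sA a ord_max aA An; rewrite /path_rel /=.
by have := ltn_ord a; lia.
Qed.

(* [inord] sends out-of-range values to [ord0]; [shift2] is only applied to
   vertices [a] with [a.+2 <= n]. *)
Definition shift2 (a : 'I_n.+1) : 'I_n.+1 := inord a.+2.

Lemma shift2E (a : 'I_n.+1) : a.+2 <= n -> shift2 a = a.+2 :> nat.
Proof. by move=> a_le; rewrite inordK. Qed.

Lemma calA_shift2 (A : {set 'I_n.+1}) :
  calA P A -> ord0 \in A -> ord_max \in A -> calA P (shift2 @: (A :\ ord_max)).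
Proof.
rewrite !(calAE path_rel_irr) => /andP[sA vcA] A0 An.
have gap := stable_ord_max_gap sA An.
set B := shift2 @: _.
have sB : stable P B.
  apply/stableP => _ _ /imsetP[a aA ->] /imsetP[b bA ->].
  rewrite /path_rel !shift2E ?gap //.
  move: aA bA; rewrite !inE => /andP[_ aA] /andP[_ bA].
  by have /stableP/(_ a b aA bA) := sA; rewrite /path_rel; lia.
have cover_edge (x y : 'I_n.+1) :
    x.+1 = y -> (x \in nbhd P B) || (y \in nbhd P B).
  move=> xy; have [a aA a_near] := path_window sA vcA A0 x.
  have aA' : a \in A :\ ord_max.
    rewrite !inE aA andbT; apply/eqP => a_max.
    by move: a_near (ltn_ord y); rewrite a_max /=; lia.
  have /(imset_f shift2) aB := aA'; have fa := shift2E (gap a aA').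
  have [x_side | y_side] :=
    boolP ((shift2 a == x.-1 :> nat) || (shift2 a == x.+1 :> nat)).
  - apply/orP; left; apply/(nbhdP path_rel_irr _ sB); exists (shift2 a) => //.
    by move: x_side; rewrite /path_rel; lia.
  - apply/orP; right; apply/(nbhdP path_rel_irr _ sB); exists (shift2 a) => //.
    by move: y_side; rewrite /path_rel; lia.
rewrite sB; apply/vertex_coverP => x y /orP[/eqP xy | /eqP yx].
- exact: cover_edge.
- by rewrite orbC; apply: cover_edge.
Qed.

Lemma card_shift2_lt (A : {set 'I_n.+1}) :
  ord_max \in A -> #|shift2 @: (A :\ ord_max)| < #|A|.
Proof.
move=> An; rewrite (cardsD1 ord_max A) An add1n ltnS.
exact: leq_imset_card.
Qed.

End PathGraph.

Theorem lemma3p3 (n : nat) (A : {set 'I_n.+1}) :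
  v_stable_set (path_rel n) A -> ~ ((@ord0 n \in A) /\ (@ord_max n \in A)).
Proof.
move=> [cA minA] [A0 An].
have := minA _ (calA_shift2 cA A0 An).
by rewrite leqNgt card_shift2_lt.
Qed.
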